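(* Let $V(t),t\in\mathbb{Z}^d$, be a non-negative rf and $\|\cdot\|$ a norm on $\mathbb{R}^d$. Then $P(\lim_{\|t\|\to\infty}V(t)=0)=1$ if and only if there exists a non-decreasing sequence of integers $r_n\to\infty$ such that for every $\delta>0$, $$\lim_{m\to\infty}\limsup_{n\to\infty}P\Big(\max_{m\le\|t\|\le r_n}V(t)>\delta\Big)=0.$$ *)

From Stdlib Require Import Reals Lra Lia ZArith.
Open Scope R_scope.

(* Probability space (Omega, F, P). Events are predicates on Omega;
   P is only constrained on measurable events. *)
Record prob_space := {
  Omega :> Type;
  measurable : (Omega -> Prop) -> Prop;
  meas_full : measurable (fun _ => True);
  meas_compl : forall A, measurable A -> measurable (fun w => ~ A w);
  meas_union : forall A : nat -> Omega -> Prop,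
      (forall n, measurable (A n)) -> measurable (fun w => exists n, A n w);
  P : (Omega -> Prop) -> R;
  P_nonneg : forall A, measurable A -> 0 <= P A;
  P_full : P (fun _ => True) = 1;
  P_sigma_additive : forall A : nat -> Omega -> Prop,
      (forall n, measurable (A n)) ->
      (forall n m w, n <> m -> A n w -> A m w -> False) ->
      infinite_sum (fun n => P (A n)) (P (fun w => exists n, A n w))
}.

Definition fin (d : nat) := { i : nat | (i < d)%nat }.
Definition Rd (d : nat) := fin d -> R.
Definition Zd (d : nat) := fin d -> Z.
Definition Rd_add {d} (x y : Rd d) : Rd d := fun i => x i + y i.
Definition Rd_scale {d} (c : R) (x : Rd d) : Rd d := fun i => c * x i.
Definition Zd_to_Rd {d} (t : Zd d) : Rd d := fun i => IZR (t i).

Definition is_norm {d} (N : Rd d -> R) : Prop :=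
  (forall x, 0 <= N x) /\
  (forall x, N x = 0 -> forall i, x i = 0) /\
  (forall c x, N (Rd_scale c x) = Rabs c * N x) /\
  (forall x y, N (Rd_add x y) <= N x + N y).

Definition random_variable (Pr : prob_space) (X : Pr -> R) : Prop :=
  forall a : R, measurable Pr (fun w => X w <= a).

Definition random_field (Pr : prob_space) {d} (V : Zd d -> Pr -> R) : Prop :=
  forall t, random_variable Pr (V t).

Definition is_limsup (a : nat -> R) (l : R) : Prop :=
  forall eps, 0 < eps ->
    (exists N, forall n, (n >= N)%nat -> a n < l + eps) /\
    (forall N, exists n, (n >= N)%nat /\ l - eps < a n).

Definition tends_to_zero_at_infinity {d} (N : Rd d -> R) (f : Zd d -> R) : Prop :=
  forall eps, 0 < eps -> exists M, forall t, M < N (Zd_to_Rd t) -> Rabs (f t) < eps.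

Definition max_exceeds {Pr : prob_space} {d} (N : Rd d -> R) (V : Zd d -> Pr -> R)
  (m : nat) (r : Z) (delta : R) : Pr -> Prop :=
  fun w => exists t, INR m <= N (Zd_to_Rd t) <= IZR r /\ delta < V t w.

From Stdlib Require Import Reals ZArith Lra Lia Cantor Classical
  FunctionalExtensionality PropExtensionality ProofIrrelevance.
Open Scope R_scope.

(* Let A_m(delta) be the event that V(t) > delta for some ||t|| >= m.  For a
   nondecreasing unbounded r, the events {max_{m <= ||t|| <= r_n} V(t) > delta}
   increase in n to A_m(delta), so by continuity from below the limsup in n is
   a limit and equals P(A_m(delta)).  The condition therefore says exactly that
   P(A_m(delta)) -> 0 for every delta > 0, i.e. (continuity from above) that
   each intersection over m of A_m(delta) is null; since V >= 0, the event that
   V does not tend to 0 is the countable union of these intersections over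
   delta = 1/(k+1), so this is equivalent to almost sure convergence. *)

Section Probability.

Variable Pr : prob_space.
Implicit Types A B : Pr -> Prop.

Lemma event_ext A B : (forall w, A w <-> B w) -> A = B.
Proof.
  intros H. apply functional_extensionality; intros w.
  apply propositional_extensionality, H.
Qed.

Lemma P_ext A B : (forall w, A w <-> B w) -> P Pr A = P Pr B.
Proof. intros H; now rewrite (event_ext A B H). Qed.

Lemma measurable_ext A B :
  (forall w, A w <-> B w) -> measurable Pr A -> measurable Pr B.
Proof. intros H; now rewrite (event_ext A B H). Qed.

Lemma measurable_empty : measurable Pr (fun _ => False).
Proof.
  apply (measurable_ext (fun w => ~ True)); [tauto|].
  apply meas_compl, meas_full.
Qed.

Lemma measurable_countable_inter (A : nat -> Pr -> Prop) :
  (forall n, measurable Pr (A n)) -> measurable Pr (fun w => forall n, A n w).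
Proof.
  intros HA. apply (measurable_ext (fun w => ~ exists n, ~ A n w)).
  - intros w; split.
    + intros H n. apply NNPP; intros Hn; apply H; eauto.
    + intros H [n Hn]; auto.
  - apply meas_compl, meas_union; intros n; apply meas_compl, HA.
Qed.

Lemma measurable_or A B :
  measurable Pr A -> measurable Pr B -> measurable Pr (fun w => A w \/ B w).
Proof.
  intros HA HB.
  apply (measurable_ext (fun w => exists n : nat, (if Nat.eqb n 0 then A else B) w)).
  - intros w; split.
    + intros [[|n] Hn]; simpl in Hn; auto.
    + intros [H|H]; [exists 0%nat | exists 1%nat]; auto.
  - apply meas_union; intros [|n]; simpl; auto.
Qed.

Lemma measurable_and A B :
  measurable Pr A -> measurable Pr B -> measurable Pr (fun w => A w /\ B w).
Proof.
  intros HA HB. apply (measurable_ext (fun w => ~ (~ A w \/ ~ B w))); [intros w; tauto|].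
  apply meas_compl, measurable_or; apply meas_compl; auto.
Qed.

Lemma measurable_diff A B :
  measurable Pr A -> measurable Pr B -> measurable Pr (fun w => A w /\ ~ B w).
Proof. intros HA HB; apply measurable_and, meas_compl; auto. Qed.

Lemma measurable_const_and (c : Prop) A :
  measurable Pr A -> measurable Pr (fun w => c /\ A w).
Proof.
  intros HA. destruct (classic c) as [Hc|Hc].
  - apply (measurable_ext A); [tauto|auto].
  - apply (measurable_ext (fun _ => False)); [tauto|apply measurable_empty].
Qed.

Lemma infinite_sum_eventually_constant f l c n0 :
  infinite_sum f l -> (forall n, (n >= n0)%nat -> sum_f_R0 f n = c) -> l = c.
Proof.
  intros Hf Hc. destruct (Req_dec l c) as [|Hne]; auto. exfalso.
  destruct (Hf (Rabs (l - c))) as [n1 Hn1]; [apply Rabs_pos_lt; lra|].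
  specialize (Hn1 (n1 + n0)%nat ltac:(lia)). rewrite Hc in Hn1 by lia.
  unfold Rdist in Hn1. rewrite Rabs_minus_sym in Hn1. lra.
Qed.

Lemma P_empty : P Pr (fun _ => False) = 0.
Proof.
  pose proof (P_sigma_additive Pr (fun _ _ => False) (fun _ => measurable_empty)
    ltac:(intros; auto)) as Hsum. cbv beta in Hsum.
  rewrite (P_ext (fun w => exists _ : nat, False) (fun _ => False)) in Hsum
    by (intros; split; [intros [_ []] | tauto]).
  set (c := P Pr (fun _ => False)) in *.
  assert (Hc : 0 <= c) by apply P_nonneg, measurable_empty.
  assert (Hpartial : forall n, sum_f_R0 (fun _ => c) n = INR (S n) * c).
  { induction n as [|n IH]; simpl sum_f_R0; [simpl; ring|].
    rewrite IH, (S_INR (S n)); ring. }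
  destruct (Req_dec c 0) as [|Hne]; auto. exfalso.
  (* the partial sums (n+1) c of the constant series cannot converge to c > 0 *)
  destruct (Hsum c) as [n Hn]; [lra|].
  specialize (Hn (S n) ltac:(lia)). rewrite Hpartial in Hn. unfold Rdist in Hn.
  pose proof (pos_INR n). rewrite !S_INR in Hn.
  rewrite Rabs_right in Hn by nra. nra.
Qed.

Lemma P_disjoint_union A B :
  measurable Pr A -> measurable Pr B -> (forall w, A w -> B w -> False) ->
  P Pr (fun w => A w \/ B w) = P Pr A + P Pr B.
Proof.
  intros HA HB Hdisj.
  set (S := fun n : nat => match n with
                           | 0%nat => A | 1%nat => B | _ => fun _ : Pr => False end).
  assert (HS : forall n, measurable Pr (S n)).
  { intros [|[|n]]; simpl; auto using measurable_empty. }
  assert (HSdisj : forall n m w, n <> m -> S n w -> S m w -> False).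
  { intros [|[|n]] [|[|m]] w Hnm; simpl; try tauto; try lia; eauto. }
  pose proof (P_sigma_additive Pr S HS HSdisj) as Hsum.
  rewrite (P_ext _ (fun w => A w \/ B w)) in Hsum.
  2:{ intros w; split.
      - intros [[|[|n]] Hn]; simpl in Hn; tauto.
      - intros [Hw|Hw]; [exists 0%nat|exists 1%nat]; auto. }
  apply (infinite_sum_eventually_constant _ _ _ 1%nat Hsum).
  intros [|n] Hn; [lia|]. clear Hn.
  induction n as [|n IH]; [reflexivity|].
  change (sum_f_R0 (fun k => P Pr (S k)) (Datatypes.S (Datatypes.S n)))
    with (sum_f_R0 (fun k => P Pr (S k)) (Datatypes.S n) + P Pr (fun _ => False)).
  rewrite IH, P_empty. ring.
Qed.

Lemma P_split A B :
  measurable Pr A -> measurable Pr B ->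
  P Pr A = P Pr (fun w => A w /\ B w) + P Pr (fun w => A w /\ ~ B w).
Proof.
  intros HA HB. rewrite <- P_disjoint_union.
  - apply P_ext; intros w. destruct (classic (B w)); tauto.
  - now apply measurable_and.
  - now apply measurable_diff.
  - tauto.
Qed.

Lemma P_mono A B :
  measurable Pr A -> measurable Pr B -> (forall w, A w -> B w) -> P Pr A <= P Pr B.
Proof.
  intros HA HB HAB. rewrite (P_split B A HB HA).
  rewrite (P_ext (fun w => B w /\ A w) A) by firstorder.
  pose proof (P_nonneg Pr _ (measurable_diff B A HB HA)). lra.
Qed.

Lemma P_compl A : measurable Pr A -> P Pr (fun w => ~ A w) = 1 - P Pr A.
Proof.
  intros HA. rewrite <- (P_full Pr), (P_split (fun _ => True) A (meas_full Pr) HA).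
  rewrite (P_ext (fun _ => True /\ A _) A), (P_ext (fun w => True /\ ~ A w) (fun w => ~ A w))
    by tauto.
  ring.
Qed.

Lemma P_eq_1_iff_compl_null A :
  measurable Pr A -> P Pr A = 1 <-> P Pr (fun w => ~ A w) = 0.
Proof. intros HA. rewrite P_compl by exact HA. lra. Qed.

Lemma P_union_le A B :
  measurable Pr A -> measurable Pr B -> P Pr (fun w => A w \/ B w) <= P Pr A + P Pr B.
Proof.
  intros HA HB. rewrite (P_split _ A (measurable_or A B HA HB) HA).
  rewrite (P_ext (fun w => (A w \/ B w) /\ A w) A) by tauto.
  enough (P Pr (fun w => (A w \/ B w) /\ ~ A w) <= P Pr B) by lra.
  apply P_mono; auto using measurable_diff, measurable_or; tauto.
Qed.

Lemma P_increasing_union_cv (A : nat -> Pr -> Prop) :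
  (forall n, measurable Pr (A n)) -> (forall n w, A n w -> A (S n) w) ->
  Un_cv (fun n => P Pr (A n)) (P Pr (fun w => exists n, A n w)).
Proof.
  intros HA Hincr.
  assert (Hmono : forall n m w, (n <= m)%nat -> A n w -> A m w).
  { intros n m w Hnm; induction Hnm; auto. }
  set (D := fun n : nat => match n with
                           | 0%nat => A 0%nat
                           | S k => fun w => A (S k) w /\ ~ A k w end).
  assert (HD : forall n, measurable Pr (D n)).
  { intros [|n]; simpl; auto using measurable_diff. }
  assert (HDdisj : forall n m w, n <> m -> D n w -> D m w -> False).
  { assert (Hlt : forall n m w, (n < m)%nat -> D n w -> D m w -> False).
    { intros n [|m] w Hnm Hn Hm; [lia|]. destruct Hm as [_ Hm].
      apply Hm, (Hmono n); [lia|]. destruct n; simpl in Hn; tauto. }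
    intros n m w Hnm Hn Hm.
    destruct (Nat.lt_total n m) as [H|[H|H]]; [eauto|lia|eauto]. }
  pose proof (P_sigma_additive Pr D HD HDdisj) as Hsum.
  rewrite (P_ext _ (fun w => exists n, A n w)) in Hsum.
  2:{ intros w; split.
      - intros [[|n] Hn]; simpl in Hn; [|destruct Hn]; eauto.
      - intros [n Hn]. induction n as [|n IH]; [exists 0%nat; auto|].
        destruct (classic (A n w)); auto. exists (S n); simpl; auto. }
  assert (Hpartial : forall n, sum_f_R0 (fun k => P Pr (D k)) n = P Pr (A n)).
  { induction n as [|n IH]; simpl sum_f_R0; [reflexivity|].
    rewrite IH, (P_split (A (S n)) (A n)) by auto.
    rewrite (P_ext (fun w => A (S n) w /\ A n w) (A n)) by firstorder.
    reflexivity. }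
  intros eps Heps. destruct (Hsum eps Heps) as [n0 Hn0].
  exists n0. intros n Hn. rewrite <- Hpartial. auto.
Qed.

Lemma P_decreasing_inter_cv (A : nat -> Pr -> Prop) :
  (forall n, measurable Pr (A n)) -> (forall n w, A (S n) w -> A n w) ->
  Un_cv (fun n => P Pr (A n)) (P Pr (fun w => forall n, A n w)).
Proof.
  intros HA Hdecr.
  pose proof (P_increasing_union_cv (fun n w => ~ A n w)
    (fun n => meas_compl Pr _ (HA n)) (fun n w H1 H2 => H1 (Hdecr n w H2))) as Hcv.
  rewrite (P_ext _ (fun w => ~ forall n, A n w)) in Hcv.
  2:{ intros w; split; [firstorder|]. intros H. apply not_all_ex_not, H. }
  rewrite P_compl in Hcv by now apply measurable_countable_inter.
  intros eps Heps. destruct (Hcv eps Heps) as [n0 Hn0].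
  exists n0. intros n Hn. specialize (Hn0 n Hn). cbv beta in Hn0.
  rewrite P_compl in Hn0 by auto. unfold Rdist in *.
  rewrite Rabs_minus_sym. now replace (P Pr (fun w => forall n, A n w) - P Pr (A n))
    with (1 - P Pr (A n) - (1 - P Pr (fun w => forall n, A n w))) by ring.
Qed.

Lemma P_countable_union_null (A : nat -> Pr -> Prop) :
  (forall n, measurable Pr (A n)) -> (forall n, P Pr (A n) = 0) ->
  P Pr (fun w => exists n, A n w) = 0.
Proof.
  intros HA Hnull.
  set (F := fun n w => exists k, (k <= n)%nat /\ A k w).
  assert (HF : forall n, measurable Pr (F n)).
  { intros n. apply meas_union. intros k. apply measurable_const_and, HA. }
  assert (HFnull : forall n, P Pr (F n) = 0).
  { induction n as [|n IH].
    - rewrite <- (Hnull 0%nat). apply P_ext; intros w; split.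
      + intros [k [Hk Hw]]. now replace k with 0%nat in Hw by lia.
      + intros Hw; exists 0%nat; auto.
    - apply Rle_antisym; [|apply P_nonneg, HF].
      rewrite (P_ext (F (S n)) (fun w => F n w \/ A (S n) w)).
      + pose proof (P_union_le _ _ (HF n) (HA (S n))). rewrite IH, Hnull in *. lra.
      + intros w; split.
        * intros [k [Hk Hw]]. destruct (Nat.eq_dec k (S n)) as [->|]; auto.
          left; exists k; split; auto; lia.
        * intros [[k [Hk Hw]]|Hw]; [exists k|exists (S n)]; split; auto; lia. }
  assert (Hincr : forall n w, F n w -> F (S n) w).
  { intros n w [k [Hk Hw]]; exists k; split; auto; lia. }
  pose proof (P_increasing_union_cv F HF Hincr) as Hcv.
  rewrite (P_ext _ (fun w => exists n, A n w)) in Hcv.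
  2:{ intros w; split; [intros [n [k [_ Hk]]]; eauto | intros [n Hn]; exists n, n; auto]. }
  apply (UL_sequence (fun n => P Pr (F n))); auto.
  intros eps Heps; exists 0%nat; intros n _.
  rewrite HFnull; unfold Rdist; rewrite Rminus_0_r, Rabs_R0; auto.
Qed.

End Probability.

Lemma measurable_lt_random_variable (Pr : prob_space) (X : Pr -> R) a :
  random_variable Pr X -> measurable Pr (fun w => a < X w).
Proof.
  intros HX. apply (measurable_ext Pr (fun w => ~ X w <= a)).
  - intros w; split; [apply Rnot_le_lt|]. intros H1 H2; lra.
  - apply meas_compl, HX.
Qed.

(* Integers are enumerated through Cantor's pairing as differences of naturals. *)
Definition Z_of_code (n : nat) : Z :=
  let (a, b) := Cantor.of_nat n in (Z.of_nat a - Z.of_nat b)%Z.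

Lemma Z_of_code_surj z : exists n, Z_of_code n = z.
Proof.
  exists (Cantor.to_nat (Z.to_nat z, Z.to_nat (- z))). unfold Z_of_code.
  rewrite Cantor.cancel_of_to. lia.
Qed.

Fixpoint Zseq_of_code (d n : nat) : nat -> Z :=
  match d with
  | 0%nat => fun _ => 0%Z
  | S d' => let (a, b) := Cantor.of_nat n in
            fun i => match i with 0%nat => Z_of_code a | S i' => Zseq_of_code d' b i' end
  end.

Lemma Zseq_of_code_surj d (f : nat -> Z) :
  exists n, forall i, (i < d)%nat -> Zseq_of_code d n i = f i.
Proof.
  revert f; induction d as [|d IH]; intros f; [exists 0%nat; intros; lia|].
  destruct (Z_of_code_surj (f 0%nat)) as [a Ha].
  destruct (IH (fun i => f (S i))) as [b Hb].
  exists (Cantor.to_nat (a, b)). intros [|i] Hi; cbn [Zseq_of_code];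
    rewrite Cantor.cancel_of_to; auto. apply Hb; lia.
Qed.

Lemma Zd_enum_surj d : exists e : nat -> Zd d, forall t, exists n, e n = t.
Proof.
  exists (fun n (i : fin d) => Zseq_of_code d n (proj1_sig i)). intros t.
  set (f := fun i => match lt_dec i d with left p => t (exist _ i p) | right _ => 0%Z end).
  destruct (Zseq_of_code_surj d f) as [n Hn]. exists n.
  apply functional_extensionality. intros [i p]. simpl. rewrite Hn by auto.
  unfold f. destruct (lt_dec i d) as [q|q]; [|contradiction].
  do 2 f_equal. apply proof_irrelevance.
Qed.

Lemma measurable_exists_Zd (Pr : prob_space) d (A : Zd d -> Pr -> Prop) :
  (forall t, measurable Pr (A t)) -> measurable Pr (fun w => exists t, A t w).
Proof.
  intros HA. destruct (Zd_enum_surj d) as [e He].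
  apply (measurable_ext Pr (fun w => exists n, A (e n) w)).
  - intros w; split; [intros [n Hn]; eauto|].
    intros [t Ht]. destruct (He t) as [n <-]; eauto.
  - apply meas_union; auto.
Qed.

Lemma is_limsup_unique a l l' : is_limsup a l -> is_limsup a l' -> l = l'.
Proof.
  (* eventually a < l + e, yet infinitely often a > l' - e *)
  assert (Hle : forall l l', is_limsup a l -> is_limsup a l' -> l' <= l).
  { intros x y Hx Hy. apply Rnot_lt_le; intros Hxy.
    destruct (Hx ((y - x) / 2)) as [[n0 Hn0] _]; [lra|].
    destruct (Hy ((y - x) / 2)) as [_ Hfreq]; [lra|].
    destruct (Hfreq n0) as [n [Hn Han]]. specialize (Hn0 n Hn). lra. }
  intros Hl Hl'. apply Rle_antisym; auto.
Qed.

Lemma Un_cv_is_limsup a l : Un_cv a l -> is_limsup a l.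
Proof.
  intros Ha eps Heps. destruct (Ha eps Heps) as [n0 Hn0]. split.
  - exists n0. intros n Hn. specialize (Hn0 n Hn).
    unfold Rdist in Hn0. apply Rabs_def2 in Hn0. lra.
  - intros n1. exists (n0 + n1)%nat. split; [lia|].
    specialize (Hn0 (n0 + n1)%nat ltac:(lia)).
    unfold Rdist in Hn0. apply Rabs_def2 in Hn0. lra.
Qed.

Definition exceeds_beyond {d} (N : Rd d -> R) (f : Zd d -> R) (m : nat) (delta : R) : Prop :=
  exists t, INR m <= N (Zd_to_Rd t) /\ delta < f t.

Lemma exceeds_beyond_le {d} (N : Rd d -> R) (f : Zd d -> R) m m' delta delta' :
  (m <= m')%nat -> delta <= delta' ->
  exceeds_beyond N f m' delta' -> exceeds_beyond N f m delta.
Proof.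
  intros Hm Hdelta [t [Ht Hft]]. exists t. apply le_INR in Hm. split; lra.
Qed.

Lemma tends_to_zero_iff_not_exceeds {d} (N : Rd d -> R) (f : Zd d -> R) :
  (forall t, 0 <= f t) ->
  tends_to_zero_at_infinity N f <->
  forall k : nat, exists m, ~ exceeds_beyond N f m (/ INR (S k)).
Proof.
  intros Hf. split.
  - intros Hlim k.
    destruct (Hlim (/ INR (S k))) as [M HM].
    { apply Rinv_0_lt_compat, lt_0_INR; lia. }
    destruct (INR_unbounded M) as [m Hm]. exists m. intros [t [Ht Hft]].
    specialize (HM t ltac:(lra)). pose proof (Rle_abs (f t)). lra.
  - intros Hsmall eps Heps.
    destruct (archimed_cor1 eps Heps) as [K [HK HK0]].
    destruct (Hsmall (K - 1)%nat) as [m Hm]. replace (S (K - 1)) with K in Hm by lia.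
    exists (INR m). intros t Ht. rewrite Rabs_pos_eq by auto.
    apply Rnot_le_lt. intros Hft. apply Hm. exists t. split; lra.
Qed.

Section RandomField.

Variables (Pr : prob_space) (d : nat) (V : Zd d -> Pr -> R) (N : Rd d -> R).
Hypothesis HV : random_field Pr V.

Lemma measurable_exceeds_beyond m delta :
  measurable Pr (fun w => exceeds_beyond N (fun t => V t w) m delta).
Proof.
  apply measurable_exists_Zd. intros t.
  apply measurable_const_and, measurable_lt_random_variable, HV.
Qed.

Lemma measurable_max_exceeds m r delta : measurable Pr (max_exceeds N V m r delta).
Proof.
  apply measurable_exists_Zd. intros t.
  apply measurable_const_and, measurable_lt_random_variable, HV.
Qed.

Lemma P_max_exceeds_cv (r : nat -> Z) m delta :
  (forall n, (r n <= r (S n))%Z) ->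
  (forall K : Z, exists n0, forall n, (n >= n0)%nat -> (K <= r n)%Z) ->
  Un_cv (fun n => P Pr (max_exceeds N V m (r n) delta))
        (P Pr (fun w => exceeds_beyond N (fun t => V t w) m delta)).
Proof.
  intros Hr Hrinf.
  rewrite (P_ext Pr _ (fun w => exists n, max_exceeds N V m (r n) delta w)).
  - apply P_increasing_union_cv; [intros n; apply measurable_max_exceeds|].
    intros n w [t [[Ht1 Ht2] Hv]]. exists t.
    pose proof (IZR_le _ _ (Hr n)). repeat split; lra.
  - intros w; split.
    + intros [t [Ht Hv]]. destruct (archimed (N (Zd_to_Rd t))) as [Hup _].
      destruct (Hrinf (up (N (Zd_to_Rd t)))) as [n0 Hn0].
      specialize (Hn0 n0 (le_n _)). apply IZR_le in Hn0.
      exists n0, t. repeat split; lra.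
    + intros [n [t [[Ht _] Hv]]]. exists t; auto.
Qed.

Hypothesis Hnn : forall t w, 0 <= V t w.

Lemma P_tends_to_zero_iff_null_exceedance :
  P Pr (fun w => tends_to_zero_at_infinity N (fun t => V t w)) = 1 <->
  forall delta, 0 < delta ->
    P Pr (fun w => forall m, exceeds_beyond N (fun t => V t w) m delta) = 0.
Proof.
  set (Ek := fun k m w => exceeds_beyond N (fun t => V t w) m (/ INR (S k))).
  rewrite (P_ext Pr _ (fun w => forall k, exists m, ~ Ek k m w))
    by (intros w; apply tends_to_zero_iff_not_exceeds; auto).
  assert (HT : measurable Pr (fun w => forall k, exists m, ~ Ek k m w)).
  { apply measurable_countable_inter; intros k.
    apply meas_union; intros m. apply meas_compl, measurable_exceeds_beyond. }
  assert (Hcompl : forall w, ~ (forall k, exists m, ~ Ek k m w) <->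
                             exists k, forall m, Ek k m w).
  { intros w; split.
    - intros Hw. apply not_all_ex_not in Hw as [k Hk]. exists k. intros m.
      apply NNPP. intros Hm. apply Hk. eauto.
    - intros [k Hk] Hw. destruct (Hw k) as [m Hm]. auto. }
  rewrite P_eq_1_iff_compl_null, (P_ext Pr _ _ Hcompl) by exact HT.
  split.
  - intros Hnull delta Hdelta.
    destruct (archimed_cor1 delta Hdelta) as [K [HK HK0]].
    apply Rle_antisym.
    2:{ apply P_nonneg, measurable_countable_inter. intros m; apply measurable_exceeds_beyond. }
    rewrite <- Hnull. apply P_mono.
    + apply measurable_countable_inter. intros m; apply measurable_exceeds_beyond.
    + apply meas_union; intros k. apply measurable_countable_inter.
      intros m; apply measurable_exceeds_beyond.
    + intros w Hw. exists (K - 1)%nat. intros m.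
      apply (exceeds_beyond_le _ _ m m _ delta); auto.
      replace (S (K - 1)) with K by lia. lra.
  - intros Hnull. apply P_countable_union_null.
    + intros k. apply measurable_countable_inter. intros m; apply measurable_exceeds_beyond.
    + intros k. apply Hnull, Rinv_0_lt_compat, lt_0_INR; lia.
Qed.

Lemma P_tends_to_zero_iff_exceedance_cv :
  P Pr (fun w => tends_to_zero_at_infinity N (fun t => V t w)) = 1 <->
  forall delta, 0 < delta ->
    Un_cv (fun m => P Pr (fun w => exceeds_beyond N (fun t => V t w) m delta)) 0.
Proof.
  rewrite P_tends_to_zero_iff_null_exceedance.
  enough (Hcv : forall delta,
    Un_cv (fun m => P Pr (fun w => exceeds_beyond N (fun t => V t w) m delta))
          (P Pr (fun w => forall m, exceeds_beyond N (fun t => V t w) m delta))).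
  { split; intros H delta Hdelta; specialize (Hcv delta).
    - now rewrite <- (H delta Hdelta).
    - exact (UL_sequence _ _ _ Hcv (H delta Hdelta)). }
  intros delta. apply P_decreasing_inter_cv.
  - intros m; apply measurable_exceeds_beyond.
  - intros m w. apply exceeds_beyond_le; [lia | lra].
Qed.

End RandomField.

Theorem lemmaA4 (Pr : prob_space) (d : nat) (V : Zd d -> Pr -> R)
  (HV : random_field Pr V) (Hnn : forall t w, 0 <= V t w)
  (N : Rd d -> R) (HN : is_norm N) :
  P Pr (fun w => tends_to_zero_at_infinity N (fun t => V t w)) = 1
  <->
  exists r : nat -> Z,
    (forall n, (r n <= r (S n))%Z) /\
    (forall K : Z, exists n0, forall n, (n >= n0)%nat -> (K <= r n)%Z) /\
    forall delta, 0 < delta ->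
      exists L : nat -> R,
        (forall m, is_limsup (fun n => P Pr (max_exceeds N V m (r n) delta)) (L m)) /\
        Un_cv L 0.
Proof.
  rewrite P_tends_to_zero_iff_exceedance_cv by assumption.
  split.
  - intros Hcv.
    assert (Hmono : forall n, (Z.of_nat n <= Z.of_nat (S n))%Z) by (intros; lia).
    assert (Hunbounded : forall K, exists n0, forall n, (n >= n0)%nat -> (K <= Z.of_nat n)%Z).
    { intros K. exists (Z.to_nat K). intros n Hn; lia. }
    exists Z.of_nat. split; [exact Hmono|]. split; [exact Hunbounded|].
    intros delta Hdelta. eexists. split; [|exact (Hcv delta Hdelta)].
    intros m. apply Un_cv_is_limsup, P_max_exceeds_cv; assumption.
  - intros [r [Hr [Hrinf Hlimsup]]] delta Hdelta.
    destruct (Hlimsup delta Hdelta) as [L [HL HL0]].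
    enough (HLeq : L = fun m => P Pr (fun w => exceeds_beyond N (fun t => V t w) m delta))
      by now rewrite <- HLeq.
    apply functional_extensionality. intros m.
    apply (is_limsup_unique _ _ _ (HL m)), Un_cv_is_limsup, P_max_exceeds_cv; assumption.
Qed.
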